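(* Let $P,A_I,A_O,B_I,B_O,F$ be finite-dimensional Hilbert spaces with $\dim A_I=\dim A_O=\dim B_I=\dim B_O=d$ and $\dim P=\dim F=D$, and let $U:P\otimes A_O\otimes B_O\to A_I\otimes B_I\otimes F$ be a unitary operator representing a direct sum of pure combs with two slots $A$ and $B$. (1) If $D=d$, then $U$ is causally ordered, and either $U=U_0^{P\to A_I}\otimes U_1^{A_O\to B_I}\otimes U_2^{B_O\to F}$ for some unitaries $U_0:P\to A_I$, $U_1:A_O\to B_I$, $U_2:B_O\to F$, or $U=V_0^{P\to B_I}\otimes V_1^{B_O\to A_I}\otimes V_2^{A_O\to F}$ for some unitaries $V_0:P\to B_I$, $V_1:B_O\to A_I$, $V_2:A_O\to F$. (2) If $D=2d$, then either $U$ is causally ordered, or there are tensor decompositions $P=P_c\otimes P_t$, $F=F_c\otimes F_t$ with $\dim P_c=\dim F_c=2$, $\dim P_t=\dim F_t=d$, orthonormal bases $\{|0\rangle,|1\rangle\}$ of $P_c$ and of $F_c$, and unitaries $U_0:P_t\to A_I$, $U_1:A_O\to B_I$, $U_2:B_O\to F_t$, $V_0:P_t\to B_I$, $V_1:B_O\to A_I$, $V_2:A_O\to F_t$ such that $$U=|0\rangle^{F_c}\langle0|^{P_c}\otimes U_0^{P_t\to A_I}\otimes U_1^{A_O\to B_I}\otimes U_2^{B_O\to F_t}+|1\rangle^{F_c}\langle1|^{P_c}\otimes V_0^{P_t\to B_I}\otimes V_1^{B_O\to A_I}\otimes V_2^{A_O\to F_t}.$$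
   Context: Choi vector of $X:\mathcal{H}_I\to\mathcal{H}_O$: $|X\rangle\rangle=\sum_i|i\rangle\otimes X|i\rangle$. A unitary $V:P'\otimes A_O\otimes B_O\to A_I\otimes B_I\otimes F'$ represents the two-slot supermap (slots $A$: $A_I\to A_O$, $B$: $B_I\to B_O$, global past $P'$, global future $F'$) with Choi operator $|V\rangle\rangle\langle\langle V|$. It represents a quantum comb of $A\prec B$ if this Choi operator $W\ge0$ satisfies $\mathrm{Tr}_{F'}W=1^{B_O}\otimes R_2$, $\mathrm{Tr}_{B_I}R_2=1^{A_O}\otimes R_1$, $\mathrm{Tr}_{A_I}R_1=1^{P'}$ for some $R_2,R_1$ (realizable by a circuit using $A$ before $B$); comb of $B\prec A$ with $A,B$ exchanged. ''$U$ is causally ordered'' means $U$ represents a quantum comb of $A\prec B$ or of $B\prec A$. $U$ represents a direct sum of pure combs if there are orthogonal decompositions $P=P^{A\prec B}\oplus P^{B\prec A}$, $F=F^{A\prec B}\oplus F^{B\prec A}$ and unitaries $U^{A\prec B}:P^{A\prec B}\otimes A_O\otimes B_O\to A_I\otimes B_I\otimes F^{A\prec B}$ representing a comb of $A\prec B$ and $U^{B\prec A}:P^{B\prec A}\otimes A_O\otimes B_O\to A_I\otimes B_I\otimes F^{B\prec A}$ representing a comb of $B\prec A$, with $U=U^{A\prec B}\oplus U^{B\prec A}$. In tensor products of operators with superscripts $X\to Y$, each factor maps the indicated input space to the indicated output space, and the factors are arranged so that the product maps $P\otimes A_O\otimes B_O$ to $A_I\otimes B_I\otimes F$. *)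

(* Finite-dimensional Hilbert spaces are modelled as coordinate
   spaces C^n (C : numClosedFieldType, e.g. the complex numbers), operators as
   matrices acting on column vectors, and tensor products via the Kronecker
   product / index encoding of mathcomp-real-closed's mxtens.v. *)
From HB Require Import structures.
From mathcomp Require Import all_boot all_order all_algebra.
From mathcomp Require Export mxtens.
Set Implicit Arguments. Unset Strict Implicit. Unset Printing Implicit Defensive.
Import Order.TTheory GRing.Theory Num.Theory.
Local Open Scope ring_scope.

Section Defs.
Variable C : numClosedFieldType.

Definition adjmx m n (A : 'M[C]_(m, n)) : 'M[C]_(n, m) := (map_mx Num.conj A)^T.

Definition unitary_mx m n (A : 'M[C]_(m, n)) : Prop :=
  A *m adjmx A = 1%:M /\ adjmx A *m A = 1%:M.

Definition ix1 a b c (i : 'I_(a * b * c)) : 'I_a := (mxtens_unindex (mxtens_unindex i).1).1.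
Definition ix2 a b c (i : 'I_(a * b * c)) : 'I_b := (mxtens_unindex (mxtens_unindex i).1).2.
Definition ix3 a b c (i : 'I_(a * b * c)) : 'I_c := (mxtens_unindex i).2.
Definition jx1 a b (i : 'I_(a * b)) : 'I_a := (mxtens_unindex i).1.
Definition jx2 a b (i : 'I_(a * b)) : 'I_b := (mxtens_unindex i).2.

Definition dlt n (i j : 'I_n) : C := (i == j)%:R.

(* A two-slot supermap represented by V : P'(x)A_O(x)B_O -> A_I(x)B_I(x)F'
   (input factors in the order P', A_O, B_O; output A_I, B_I, F').
   Choi vector |V>> = sum_i |i> (x) V|i>, so the Choi operator W = |V>><<V| has
   entries W[(in,out),(in',out')] = V[out,in] * conj V[out',in'].  *)
Section Comb.
Variables (p aO bO aI bI f : nat).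
Variable V : 'M[C]_(aI * bI * f, p * aO * bO).

Definition choiW (pp : 'I_p) (ao : 'I_aO) (bo : 'I_bO) (ai : 'I_aI) (bi : 'I_bI) (ff : 'I_f)
                 (pp' : 'I_p) (ao' : 'I_aO) (bo' : 'I_bO) (ai' : 'I_aI) (bi' : 'I_bI) (ff' : 'I_f) : C :=
  V (mxtens_index (mxtens_index (ai, bi), ff)) (mxtens_index (mxtens_index (pp, ao), bo))
  * (V (mxtens_index (mxtens_index (ai', bi'), ff')) (mxtens_index (mxtens_index (pp', ao'), bo')))^*.

(* quantum comb of A < B:  Tr_F' W = 1^{B_O} (x) R2,  Tr_{B_I} R2 = 1^{A_O} (x) R1,
   Tr_{A_I} R1 = 1^{P'}  (R2 acts on P',A_O,A_I,B_I ; R1 on P',A_I) *)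
Definition comb_AB : Prop :=
  exists (R2 : 'I_p -> 'I_aO -> 'I_aI -> 'I_bI -> 'I_p -> 'I_aO -> 'I_aI -> 'I_bI -> C)
         (R1 : 'I_p -> 'I_aI -> 'I_p -> 'I_aI -> C),
    [/\ (forall pp ao bo ai bi pp' ao' bo' ai' bi',
           \sum_(ff < f) choiW pp ao bo ai bi ff pp' ao' bo' ai' bi' ff
           = dlt bo bo' * R2 pp ao ai bi pp' ao' ai' bi'),
        (forall pp ao ai pp' ao' ai',
           \sum_(bi < bI) R2 pp ao ai bi pp' ao' ai' bi = dlt ao ao' * R1 pp ai pp' ai') &
        (forall pp pp', \sum_(ai < aI) R1 pp ai pp' ai = dlt pp pp')].

(* quantum comb of B < A (roles of A and B exchanged):
   Tr_F' W = 1^{A_O} (x) R2,  Tr_{A_I} R2 = 1^{B_O} (x) R1,  Tr_{B_I} R1 = 1^{P'}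
   (R2 acts on P',B_O,A_I,B_I ; R1 on P',B_I) *)
Definition comb_BA : Prop :=
  exists (R2 : 'I_p -> 'I_bO -> 'I_aI -> 'I_bI -> 'I_p -> 'I_bO -> 'I_aI -> 'I_bI -> C)
         (R1 : 'I_p -> 'I_bI -> 'I_p -> 'I_bI -> C),
    [/\ (forall pp ao bo ai bi pp' ao' bo' ai' bi',
           \sum_(ff < f) choiW pp ao bo ai bi ff pp' ao' bo' ai' bi' ff
           = dlt ao ao' * R2 pp bo ai bi pp' bo' ai' bi'),
        (forall pp bo bi pp' bo' bi',
           \sum_(ai < aI) R2 pp bo ai bi pp' bo' ai bi' = dlt bo bo' * R1 pp bi pp' bi') &
        (forall pp pp', \sum_(bi < bI) R1 pp bi pp' bi = dlt pp pp')].

Definition causally_ordered : Prop := comb_AB \/ comb_BA.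
End Comb.

Definition dsum_op aO bO aI bI p1 p2 f1 f2
    (U1 : 'M[C]_(aI * bI * f1, p1 * aO * bO)) (U2 : 'M[C]_(aI * bI * f2, p2 * aO * bO))
    : 'M[C]_(aI * bI * (f1 + f2), (p1 + p2) * aO * bO) :=
  \matrix_(o, i)
    match split (ix3 o), split (ix1 i) with
    | inl ff, inl pp => U1 (mxtens_index (mxtens_index (ix1 o, ix2 o), ff))
                           (mxtens_index (mxtens_index (pp, ix2 i), ix3 i))
    | inr ff, inr pp => U2 (mxtens_index (mxtens_index (ix1 o, ix2 o), ff))
                           (mxtens_index (mxtens_index (pp, ix2 i), ix3 i))
    | _, _ => 0
    end.

(* U : P(x)A_O(x)B_O -> A_I(x)B_I(x)F represents a direct sum of pure combs:
   orthogonal decompositions P = P1 (+) P2, F = F1 (+) F2 (encoded by unitary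
   identifications WP : C^(p1+p2) -> P, WF : C^(f1+f2) -> F), unitaries U1 (comb
   of A<B) and U2 (comb of B<A) with U = U1 (+) U2. *)
Definition dsum_pure_combs p aO bO aI bI f (U : 'M[C]_(aI * bI * f, p * aO * bO)) : Prop :=
  exists (p1 p2 f1 f2 : nat) (WP : 'M[C]_(p, p1 + p2)) (WF : 'M[C]_(f, f1 + f2))
         (U1 : 'M[C]_(aI * bI * f1, p1 * aO * bO)) (U2 : 'M[C]_(aI * bI * f2, p2 * aO * bO)),
    [/\ unitary_mx WP, unitary_mx WF,
        unitary_mx U1 /\ comb_AB U1, unitary_mx U2 /\ comb_BA U2 &
        U = ((1%:M *t 1%:M) *t WF) *m dsum_op U1 U2 *m ((adjmx WP *t 1%:M) *t 1%:M)].

(* V0^{P->B_I} (x) V1^{B_O->A_I} (x) V2^{A_O->F}, arranged as a map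
   P(x)A_O(x)B_O -> A_I(x)B_I(x)F *)
Definition cross_op p aO bO aI bI f
    (V0 : 'M[C]_(bI, p)) (V1 : 'M[C]_(aI, bO)) (V2 : 'M[C]_(f, aO))
    : 'M[C]_(aI * bI * f, p * aO * bO) :=
  \matrix_(o, i) (V1 (ix1 o) (ix3 i) * V0 (ix2 o) (ix1 i) * V2 (ix3 o) (ix2 i)).

(* the operator of part (2), on (P_c(x)P_t)(x)A_O(x)B_O -> A_I(x)B_I(x)(F_c(x)F_t):
   |0><0| (x) U0(x)U1(x)U2 + |1><1| (x) V0(x)V1(x)V2 *)
Definition ctrl_op d (U0 U1 U2 V0 V1 V2 : 'M[C]_d)
    : 'M[C]_(d * d * (2 * d), (2 * d) * d * d) :=
  \matrix_(o, i)
    let pc := jx1 (ix1 i) in let pt := jx2 (ix1 i) in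
    let fc := jx1 (ix3 o) in let ft := jx2 (ix3 o) in
    ((val pc == 0%N) && (val fc == 0%N))%:R
       * (U0 (ix1 o) pt * U1 (ix2 o) (ix2 i) * U2 ft (ix3 i))
    + ((val pc == 1%N) && (val fc == 1%N))%:R
       * (V0 (ix2 o) pt * V1 (ix1 o) (ix3 i) * V2 ft (ix2 i)).

End Defs.

From HB Require Import structures.
From mathcomp Require Import all_boot all_order all_algebra mxtens.
From mathcomp Require Import ring zify.
Import Order.TTheory GRing.Theory Num.Theory.
Local Open Scope ring_scope.
Set Implicit Arguments. Unset Strict Implicit. Unset Printing Implicit Defensive.

(* The key fact concerns an isometry V : X (x) Y -> Z (x) W through which Y cannot
   signal to Z, i.e. the partial trace over W of its Choi operator is 1_Y (x) R.
   Its blocks G_zx = <z|V|x> : Y -> W then satisfy G_z'x'^* G_zx = R(xz, x'z') 1,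
   and the diagonal blocks have total weight 1, so some G_zx is a nonzero multiple
   of an isometry: hence dim Y <= dim W, and if dim Y = dim W all blocks are
   multiples of one unitary T, i.e. V = S (x) T with S unitary.
   In a comb of A < B the output B_O cannot signal to A_I (x) B_I, so a nonzero
   summand with past P' has dim P' = dim F' >= d, and when all spaces have
   dimension d two applications of the factorisation give U0 (x) U1 (x) U2; the
   comb of B < A is the same comb with the two slots exchanged. Hence for D = d
   only one summand of U survives, while for D = 2d either one summand vanishes
   and U is a comb, or both have dimension d and U is the controlled
   superposition of the two factorised combs. *)

Section Supermaps.
Variable C : numClosedFieldType.

Lemma adjmxE m n (A : 'M[C]_(m, n)) i j : adjmx A i j = (A j i)^*.
Proof. by rewrite !mxE. Qed.

Lemma adjmxK m n (A : 'M[C]_(m, n)) : adjmx (adjmx A) = A.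
Proof. by apply/matrixP => i j; rewrite !adjmxE conjCK. Qed.

Lemma adjmxM m n p (A : 'M[C]_(m, n)) (B : 'M[C]_(n, p)) :
  adjmx (A *m B) = adjmx B *m adjmx A.
Proof.
apply/matrixP => i j; rewrite adjmxE !mxE rmorph_sum; apply: eq_bigr => k _.
by rewrite !adjmxE rmorphM mulrC.
Qed.

Lemma adjmx_row_mx m n1 n2 (A : 'M[C]_(m, n1)) (B : 'M[C]_(m, n2)) :
  adjmx (row_mx A B) = col_mx (adjmx A) (adjmx B).
Proof. by rewrite /adjmx map_row_mx tr_row_mx. Qed.

Lemma adjmx0 m n : adjmx (0 : 'M[C]_(m, n)) = 0.
Proof. by apply/matrixP => i j; rewrite adjmxE !mxE conjC0. Qed.

Lemma unitary_dim m n (A : 'M[C]_(m, n)) : unitary_mx A -> m = n.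
Proof.
case=> AA' A'A; apply/eqP; rewrite eqn_leq.
have le_rank k l (X : 'M[C]_(k, l)) Y : X *m Y = 1%:M -> (k <= l)%N.
  by move=> XY; rewrite -(mxrank1 C k) -XY (leq_trans (mxrankM_maxl _ _)) ?rank_leq_col.
by rewrite (le_rank _ _ _ _ AA') (le_rank _ _ _ _ A'A).
Qed.

Lemma isometry_sq_unitary n (A : 'M[C]_n) : adjmx A *m A = 1%:M -> unitary_mx A.
Proof. by move=> A'A; split => //; apply: mulmx1C. Qed.

Lemma unitary1 n : unitary_mx (1%:M : 'M[C]_n).
Proof.
apply: isometry_sq_unitary; rewrite mulmx1; apply/matrixP => i j.
by rewrite adjmxE !mxE eq_sym; case: (i == j); rewrite ?conjC1 ?conjC0.
Qed.

Lemma unitaryM m n p (A : 'M[C]_(m, n)) (B : 'M[C]_(n, p)) :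
  unitary_mx A -> unitary_mx B -> unitary_mx (A *m B).
Proof.
move=> [AA' A'A] [BB' B'B]; split; rewrite adjmxM.
  by rewrite mulmxA -[A *m B *m _]mulmxA BB' mulmx1.
by rewrite mulmxA -[adjmx B *m _ *m _]mulmxA A'A mulmx1.
Qed.

Lemma unitary_adjmx m n (A : 'M[C]_(m, n)) : unitary_mx A -> unitary_mx (adjmx A).
Proof. by case=> AA' A'A; split; rewrite adjmxK. Qed.

Lemma unitary_lsubmx0 m n (W : 'M[C]_(m, n + 0)) : unitary_mx W -> unitary_mx (lsubmx W).
Proof.
rewrite -[W in unitary_mx W]hsubmxK [rsubmx W]thinmx0 /unitary_mx adjmx_row_mx.
rewrite mul_row_col mul_col_row adjmx0 mul0mx addr0 (scalar_mx_block n 0).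
by case=> -> /eq_block_mx[-> _ _ _].
Qed.

Lemma unitary_rsubmx0 m n (W : 'M[C]_(m, 0 + n)) : unitary_mx W -> unitary_mx (rsubmx W).
Proof.
suff -> : rsubmx W = W by [].
by apply/matrixP => i j; rewrite mxE; congr (W i _); apply: val_inj.
Qed.

Lemma unitary_castmx m n n' (e : n = n') (W : 'M[C]_(m, n)) :
  unitary_mx W -> unitary_mx (castmx (erefl m, e) W).
Proof. by case: n' / e; rewrite castmx_id. Qed.

Lemma unitary_col_norm n (T : 'M[C]_n) y : unitary_mx T -> \sum_w T w y * (T w y)^* = 1.
Proof.
case=> _ /(congr1 (fun A : 'M_n => A y y)); rewrite !mxE eqxx mulr1n => <-.
by apply: eq_bigr => w _; rewrite adjmxE mulrC.
Qed.

Lemma sum_mxtens m n (F : 'I_(m * n) -> C) :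
  \sum_k F k = \sum_(i < m) \sum_(j < n) F (mxtens_index (i, j)).
Proof.
rewrite pair_big /= (reindex (@mxtens_index m n)) /=; first by apply: eq_bigr => -[].
by exists (@mxtens_unindex m n) => k _; rewrite (mxtens_indexK, mxtens_unindexK).
Qed.

Lemma mxtens_index_eq m n (i i' : 'I_m) (j j' : 'I_n) :
  (mxtens_index (i, j) == mxtens_index (i', j')) = (i == i') && (j == j').
Proof. by rewrite (can_eq (@mxtens_indexK m n)) xpair_eqE. Qed.

Lemma dltxx n (i : 'I_n) : dlt C i i = 1.
Proof. by rewrite /dlt eqxx. Qed.

Lemma dltC n (i j : 'I_n) : dlt C i j = dlt C j i.
Proof. by rewrite /dlt eq_sym. Qed.

Lemma sum_dlt n (j : 'I_n) (F : 'I_n -> C) : \sum_i dlt C j i * F i = F j.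
Proof.
rewrite (bigD1 j) //= dltxx mul1r big1 ?addr0 // => i /negbTE.
by rewrite /dlt eq_sym => ->; rewrite mul0r.
Qed.

Lemma sum_dltr n (j : 'I_n) (F : 'I_n -> C) : \sum_i F i * dlt C i j = F j.
Proof. by rewrite -[RHS](sum_dlt j); apply: eq_bigr => i _; rewrite mulrC dltC. Qed.

Lemma exchange_big_coef (I : finType) n (c : 'I_n -> 'I_n -> C) (F : 'I_n -> 'I_n -> I -> C) :
  \sum_i \sum_q1 \sum_q2 c q1 q2 * F q1 q2 i = \sum_q1 \sum_q2 c q1 q2 * \sum_i F q1 q2 i.
Proof.
rewrite exchange_big; apply: eq_bigr => q1 _; rewrite exchange_big.
by apply: eq_bigr => q2 _; rewrite mulr_sumr.
Qed.

Lemma sum_isometry_dlt n m (B : 'M[C]_(n, m)) i j :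
  adjmx B *m B = 1%:M -> \sum_q1 \sum_q2 B q1 i * (B q2 j)^* * dlt C q1 q2 = dlt C i j.
Proof.
move=> isoB; have := congr1 (fun M : 'M_m => M j i) isoB; rewrite dltC /dlt !mxE => <-.
apply: eq_bigr => q1 _; rewrite (eq_bigr _ (fun q2 _ => congr1 _ (dltC q1 q2))) sum_dltr.
by rewrite adjmxE mulrC.
Qed.

Section NoSignalling.
Variables nz nw nx ny : nat.

(* [M z w x y] is the amplitude <z, w| V |x, y> of a map V : X (x) Y -> Z (x) W. *)

Definition tens_isometry (M : 'I_nz -> 'I_nw -> 'I_nx -> 'I_ny -> C) :=
  forall x y x' y', \sum_z \sum_w (M z w x y)^* * M z w x' y' = dlt C x x' * dlt C y y'.

Definition no_signalling (M : 'I_nz -> 'I_nw -> 'I_nx -> 'I_ny -> C)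
    (R : 'I_nx -> 'I_nz -> 'I_nx -> 'I_nz -> C) :=
  forall x y x' y' z z', \sum_w M z w x y * (M z' w x' y')^* = dlt C y y' * R x z x' z'.

Definition block (M : 'I_nz -> 'I_nw -> 'I_nx -> 'I_ny -> C) z x : 'M[C]_(nw, ny) :=
  \matrix_(w, y) M z w x y.

Variables (M : 'I_nz -> 'I_nw -> 'I_nx -> 'I_ny -> C) (R : 'I_nx -> 'I_nz -> 'I_nx -> 'I_nz -> C).
Hypotheses (isoM : tens_isometry M) (nosigM : no_signalling M R).

Lemma adjmx_block_mul z x z' x' : adjmx (block M z' x') *m block M z x = (R x z x' z')%:M.
Proof.
apply/matrixP => y' y; rewrite !mxE; under eq_bigr do rewrite !mxE mulrC.
by rewrite nosigM /dlt mulr_natl eq_sym.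
Qed.

Lemma sum_block_trace x : (0 < ny)%N -> \sum_z R x z x z = 1.
Proof.
move=> ny_gt0; pose y0 := Ordinal ny_gt0.
have := isoM x y0 x y0; rewrite !dltxx mulr1 => <-.
apply: eq_bigr => z _; have := nosigM x y0 x y0 z z; rewrite dltxx mul1r => <-.
by apply: eq_bigr => w _; rewrite mulrC.
Qed.

Lemma nondegenerate_block x : (0 < ny)%N -> exists z, R x z x z != 0.
Proof.
move=> ny_gt0; have [z nz_z | all0] := pickP (fun z => R x z x z != 0); first by exists z.
have := sum_block_trace x ny_gt0; rewrite big1 => [/eqP|z _]; first by rewrite eq_sym oner_eq0.
by apply/eqP; rewrite -[_ == 0]negbK all0.
Qed.

Lemma no_signalling_dim_le : (0 < nx)%N -> (ny <= nw)%N.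
Proof.
case: (posnP ny) => [-> //|ny_gt0 nx_gt0].
have [z nz_r] := nondegenerate_block (Ordinal nx_gt0) ny_gt0.
have := adjmx_block_mul z (Ordinal nx_gt0) z (Ordinal nx_gt0).
set r := R _ _ _ _ => /(congr1 ( *:%R r^-1)); rewrite scale_scalar_mx mulVf // scalemxAl.
move/(congr1 mxrank); rewrite mxrank1 => <-.
by rewrite (leq_trans (mxrankM_maxr _ _)) ?rank_leq_row.
Qed.

End NoSignalling.

Lemma no_signalling_factor n m (M : 'I_n -> 'I_m -> 'I_n -> 'I_m -> C) R :
  tens_isometry M -> no_signalling M R ->
  exists (S : 'M[C]_n) (T : 'M[C]_m),
    [/\ unitary_mx S, unitary_mx T & forall z w x y, M z w x y = S z x * T w y].
Proof.
case: n M R => [|n] M R isoM nosigM.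
  by exists 1%:M, 1%:M; split; [exact: unitary1 | exact: unitary1 | case].
case: m M R isoM nosigM => [|m] M R isoM nosigM.
  by exists 1%:M, 1%:M; split; [exact: unitary1 | exact: unitary1 | move=> z []].
have [z0 r_neq0] := nondegenerate_block isoM nosigM ord0 (ltn0Sn m).
set r := R ord0 z0 ord0 z0 in r_neq0.
have r_ge0 : 0 <= r.
  rewrite /r; have := nosigM ord0 ord0 ord0 ord0 z0 z0; rewrite dltxx mul1r => <-.
  by apply: sumr_ge0 => w _; apply: mul_conjC_ge0.
pose s := sqrtC r.
have s_neq0 : s != 0 by rewrite sqrtC_eq0.
have s_conj : s^* = s by rewrite geC0_conj // sqrtC_ge0.
have ss : s * s = r by rewrite -expr2 sqrtCK.
(* T is unitary since G^* G = r 1 for G = block M z0 ord0, and every block is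
   T T^* (block M z x), a multiple of T. *)
pose T := s^-1 *: block M z0 ord0.
have adjT : adjmx T = s^-1 *: adjmx (block M z0 ord0).
  by apply/matrixP => i j; rewrite !mxE rmorphM fmorphV /= s_conj.
have uT : unitary_mx T.
  apply: isometry_sq_unitary; rewrite adjT -scalemxAl -scalemxAr (adjmx_block_mul nosigM).
  by rewrite scalerA scale_scalar_mx -/r -ss -mulrA mulKf // mulVf.
pose S := \matrix_(z, x) (R x z ord0 z0 / s).
have EM z x : block M z x = S z x *: T.
  have [TT' _] := uT.
  rewrite -[block M z x]mul1mx -TT' -mulmxA adjT -[s^-1 *: _ *m block M z x]scalemxAl.
  by rewrite (adjmx_block_mul nosigM) scale_scalar_mx mul_mx_scalar mxE mulrC.
have EMentry z w x y : M z w x y = S z x * T w y.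
  by have := congr1 (fun A : 'M_m.+1 => A w y) (EM z x); rewrite /= !mxE => ->.
exists S, T; split => //; apply: isometry_sq_unitary; apply/matrixP => x x'.
have := isoM x ord0 x' ord0; rewrite dltxx mulr1 /dlt !mxE => <-.
apply: eq_bigr => z _; rewrite adjmxE.
rewrite -[LHS]mulr1 -(unitary_col_norm ord0 uT) mulr_sumr; apply: eq_bigr => w _.
by rewrite !EMentry rmorphM; ring.
Qed.

Local Notation idx3 a b c := (mxtens_index (mxtens_index (a, b), c)).

Lemma matrix_idx3P a b c p q r (A B : 'M[C]_(a * b * c, p * q * r)) :
  (forall i j k l m n, A (idx3 i j k) (idx3 l m n) = B (idx3 i j k) (idx3 l m n)) -> A = B.
Proof.
move=> AB; apply/matrixP => o i.
case: (mxtens_indexP o) => o' k; case: (mxtens_indexP o') => {o'} i' j.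
by case: (mxtens_indexP i) => i'' n; case: (mxtens_indexP i'') => l m; apply: AB.
Qed.

Definition amp nz nw nx ny (V : 'M[C]_(nz * nw, nx * ny)) z w x y :=
  V (mxtens_index (z, w)) (mxtens_index (x, y)).

Lemma tens_isometry_amp nz nw nx ny (V : 'M[C]_(nz * nw, nx * ny)) :
  adjmx V *m V = 1%:M -> tens_isometry (amp V).
Proof.
move=> isoV x y x' y'.
have := congr1 (fun A : 'M_(nx * ny) => A (mxtens_index (x, y)) (mxtens_index (x', y'))) isoV.
rewrite !mxE mxtens_index_eq /dlt -natrM mulnb => <-; rewrite sum_mxtens.
by apply: eq_bigr => z _; apply: eq_bigr => w _; rewrite adjmxE.
Qed.

Section Combs.
Variables (p aO bO aI bI f : nat) (V : 'M[C]_(aI * bI * f, p * aO * bO)).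

Lemma comb_AB_no_signalling : comb_AB V -> exists R, no_signalling (amp V) R.
Proof.
case=> R2 [R1 [trF _ _]].
exists (fun x z x' z' => R2 (jx1 x) (jx2 x) (jx1 z) (jx2 z) (jx1 x') (jx2 x') (jx1 z') (jx2 z')).
move=> x bo x' bo' z z'.
case: (mxtens_indexP x) => pp ao; case: (mxtens_indexP x') => pp' ao'.
case: (mxtens_indexP z) => ai bi; case: (mxtens_indexP z') => ai' bi'.
by rewrite /jx1 /jx2 !mxtens_indexK -trF.
Qed.

Lemma comb_AB_dim : adjmx V *m V = 1%:M -> comb_AB V -> (0 < p * aO)%N -> (bO <= f)%N.
Proof.
move=> isoV /comb_AB_no_signalling[R nosig].
exact: no_signalling_dim_le (tens_isometry_amp isoV) nosig.
Qed.

Definition swap_slots : 'M[C]_(bI * aI * f, p * bO * aO) :=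
  \matrix_(o, i) V (idx3 (ix2 o) (ix1 o) (ix3 o)) (idx3 (ix1 i) (ix3 i) (ix2 i)).

Lemma swap_slotsE ai bi ff pp ao bo :
  swap_slots (idx3 bi ai ff) (idx3 pp bo ao) = V (idx3 ai bi ff) (idx3 pp ao bo).
Proof. by rewrite mxE /ix1 /ix2 /ix3 !mxtens_indexK. Qed.

Lemma swap_slots_isometry : adjmx V *m V = 1%:M -> adjmx swap_slots *m swap_slots = 1%:M.
Proof.
move=> isoV; apply: matrix_idx3P => pp bo ao pp' bo' ao'.
have := congr1 (fun A : 'M_(p * aO * bO) => A (idx3 pp ao bo) (idx3 pp' ao' bo')) isoV.
rewrite !mxE !mxtens_index_eq andbAC => <-; rewrite !sum_mxtens exchange_big /=.
by do 3!apply: eq_bigr => ? _; rewrite !adjmxE !swap_slotsE.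
Qed.

Lemma comb_BA_swap : comb_BA V -> comb_AB swap_slots.
Proof.
case=> R2 [R1 [trF trAI trBI]].
exists (fun pp bo bi ai pp' bo' bi' ai' => R2 pp bo ai bi pp' bo' ai' bi'), R1; split => //.
move=> pp bo ao bi ai pp' bo' ao' bi' ai'; rewrite -trF; apply: eq_bigr => ff _.
by rewrite /choiW !swap_slotsE.
Qed.

End Combs.

Lemma comb_BA_dim p aO bO aI bI f (V : 'M[C]_(aI * bI * f, p * aO * bO)) :
  adjmx V *m V = 1%:M -> comb_BA V -> (0 < p * bO)%N -> (aO <= f)%N.
Proof. by move=> isoV cV; apply: comb_AB_dim (swap_slots_isometry isoV) (comb_BA_swap cV). Qed.

Lemma comb_AB_factor d (V : 'M[C]_(d * d * d, d * d * d)) :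
  (0 < d)%N -> adjmx V *m V = 1%:M -> comb_AB V ->
  exists S0 S1 T : 'M[C]_d,
    [/\ unitary_mx S0, unitary_mx S1, unitary_mx T & V = (S0 *t S1) *t T].
Proof.
move=> d_gt0 isoV cV; have [R nosigV] := comb_AB_no_signalling cV.
case: cV => R2 [R1 [trF trBI _]].
have [S [T [uS uT EV]]] := no_signalling_factor (tens_isometry_amp isoV) nosigV.
have EV' ai bi ff pp ao bo : V (idx3 ai bi ff) (idx3 pp ao bo) = amp S ai bi pp ao * T ff bo.
  exact: EV.
have R2E pp ao ai bi pp' ao' ai' bi' :
    R2 pp ao ai bi pp' ao' ai' bi' = amp S ai bi pp ao * (amp S ai' bi' pp' ao')^*.
  pose y0 := Ordinal d_gt0.
  have := trF pp ao y0 ai bi pp' ao' y0 ai' bi'; rewrite dltxx mul1r => <-.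
  rewrite -[RHS]mulr1 -(unitary_col_norm y0 uT) mulr_sumr; apply: eq_bigr => ff _.
  by rewrite /choiW !EV' rmorphM; ring.
have nosigS : no_signalling (amp S) R1.
  by move=> pp ao pp' ao' ai ai'; rewrite -trBI; apply: eq_bigr => bi _; rewrite R2E.
have [S0 [S1 [uS0 uS1 ES]]] := no_signalling_factor (tens_isometry_amp uS.2) nosigS.
exists S0, S1, T; split => //; apply: matrix_idx3P => ai bi ff pp ao bo.
by rewrite EV' ES !tensmxE.
Qed.

Lemma crossE p aO bO aI bI f (V0 : 'M[C]_(bI, p)) (V1 : 'M[C]_(aI, bO)) (V2 : 'M[C]_(f, aO))
    ai bi ff pp ao bo :
  cross_op V0 V1 V2 (idx3 ai bi ff) (idx3 pp ao bo) = V1 ai bo * V0 bi pp * V2 ff ao.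
Proof. by rewrite mxE /ix1 /ix2 /ix3 !mxtens_indexK. Qed.

Lemma comb_BA_factor d (V : 'M[C]_(d * d * d, d * d * d)) :
  (0 < d)%N -> adjmx V *m V = 1%:M -> comb_BA V ->
  exists V0 V1 V2 : 'M[C]_d,
    [/\ unitary_mx V0, unitary_mx V1, unitary_mx V2 & V = cross_op V0 V1 V2].
Proof.
move=> d_gt0 isoV cV.
have [V0 [V1 [V2 [uV0 uV1 uV2 EW]]]] :=
  comb_AB_factor d_gt0 (swap_slots_isometry isoV) (comb_BA_swap cV).
exists V0, V1, V2; split => //; apply: matrix_idx3P => ai bi ff pp ao bo.
by rewrite -swap_slotsE EW !tensmxE crossE [V0 _ _ * _]mulrC.
Qed.

Section Relabel.
Variables (a b f f' p p' q r : nat).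

Definition relabel (A : 'M[C]_(f', f)) (B : 'M[C]_(p', p)) (X : 'M[C]_(a * b * f, p' * q * r))
    : 'M[C]_(a * b * f', p * q * r) :=
  ((1%:M *t 1%:M) *t A) *m X *m ((B *t 1%:M) *t 1%:M).

Lemma mul_tens11mxE n (A : 'M[C]_(f', f)) (X : 'M[C]_(a * b * f, n)) ai bi ff l :
  (((1%:M *t 1%:M) *t A) *m X) (idx3 ai bi ff) l = \sum_f1 A ff f1 * X (idx3 ai bi f1) l.
Proof.
rewrite mxE !sum_mxtens; under eq_bigr do under eq_bigr do under eq_bigr do
  rewrite !tensmxE !mxE -!mulrA.
under eq_bigr do under eq_bigr do rewrite -mulr_sumr.
under eq_bigr do rewrite -mulr_sumr; rewrite sum_dlt.
by under eq_bigr do rewrite -mulr_sumr; rewrite sum_dlt.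
Qed.

Lemma mulmx_tens11E n (B : 'M[C]_(p', p)) (X : 'M[C]_(n, p' * q * r)) o pp ao bo :
  (X *m ((B *t 1%:M) *t 1%:M)) o (idx3 pp ao bo) = \sum_q1 X o (idx3 q1 ao bo) * B q1 pp.
Proof.
rewrite mxE !sum_mxtens; apply: eq_bigr => q1 _.
under eq_bigr do under eq_bigr do rewrite !tensmxE !mxE !mulrA.
by under eq_bigr do rewrite sum_dltr; rewrite sum_dltr.
Qed.

Lemma relabelE (A : 'M[C]_(f', f)) (B : 'M[C]_(p', p)) X ai bi ff pp ao bo :
  relabel A B X (idx3 ai bi ff) (idx3 pp ao bo)
  = \sum_f1 \sum_q1 A ff f1 * X (idx3 ai bi f1) (idx3 q1 ao bo) * B q1 pp.
Proof.
rewrite mulmx_tens11E; under eq_bigr do rewrite mul_tens11mxE mulr_suml.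
by rewrite exchange_big.
Qed.

Lemma choi_trace_post p0 (A : 'M[C]_(f', f)) (X : 'M[C]_(a * b * f, p0 * q * r))
    pp ao bo ai bi pp' ao' bo' ai' bi' :
  adjmx A *m A = 1%:M ->
  \sum_ff choiW (((1%:M *t 1%:M) *t A) *m X) pp ao bo ai bi ff pp' ao' bo' ai' bi' ff
  = \sum_ff choiW X pp ao bo ai bi ff pp' ao' bo' ai' bi' ff.
Proof.
move=> isoA; have orthA f1 f2 : \sum_ff A ff f1 * (A ff f2)^* = dlt C f2 f1.
  have := congr1 (fun M : 'M_f => M f2 f1) isoA; rewrite /dlt !mxE => <-.
  by apply: eq_bigr => ff _; rewrite adjmxE mulrC.
rewrite /choiW; under eq_bigr do rewrite !mul_tens11mxE rmorph_sum mulr_suml.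
under eq_bigr do under eq_bigr do rewrite mulr_sumr.
rewrite exchange_big; apply: eq_bigr => f1 _ /=; rewrite exchange_big /=.
rewrite -(sum_dlt f1 (fun f2 => X (idx3 ai bi f1) (idx3 pp ao bo)
                                * (X (idx3 ai' bi' f2) (idx3 pp' ao' bo'))^*)).
apply: eq_bigr => f2 _; rewrite dltC -orthA mulr_suml; apply: eq_bigr => ff _.
by rewrite rmorphM; ring.
Qed.

Lemma choi_trace_pre (B : 'M[C]_(p', p)) (X : 'M[C]_(a * b * f, p' * q * r))
    pp ao bo ai bi pp' ao' bo' ai' bi' :
  \sum_ff choiW (X *m ((B *t 1%:M) *t 1%:M)) pp ao bo ai bi ff pp' ao' bo' ai' bi' ff
  = \sum_q1 \sum_q2 B q1 pp * (B q2 pp')^*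
      * \sum_ff choiW X q1 ao bo ai bi ff q2 ao' bo' ai' bi' ff.
Proof.
rewrite /choiW; under [RHS]eq_bigr do under eq_bigr do rewrite mulr_sumr.
under [RHS]eq_bigr do rewrite exchange_big; rewrite [RHS]exchange_big /=.
apply: eq_bigr => ff _; rewrite !mulmx_tens11E rmorph_sum mulr_suml; apply: eq_bigr => q1 _.
by rewrite mulr_sumr; apply: eq_bigr => q2 _; rewrite rmorphM; ring.
Qed.

Lemma comb_AB_relabel (A : 'M[C]_(f', f)) (B : 'M[C]_(p', p))
    (X : 'M[C]_(a * b * f, p' * q * r)) :
  adjmx A *m A = 1%:M -> adjmx B *m B = 1%:M -> comb_AB X -> comb_AB (relabel A B X).
Proof.
move=> isoA isoB [R2 [R1 [trF trBI trAI]]].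
pose c pp pp' q1 q2 := B q1 pp * (B q2 pp')^*.
exists (fun pp ao ai bi pp' ao' ai' bi' =>
  \sum_q1 \sum_q2 c pp pp' q1 q2 * R2 q1 ao ai bi q2 ao' ai' bi').
exists (fun pp ai pp' ai' => \sum_q1 \sum_q2 c pp pp' q1 q2 * R1 q1 ai q2 ai').
split => /=.
- move=> pp ao bo ai bi pp' ao' bo' ai' bi'.
  rewrite /relabel -mulmxA choi_trace_post // choi_trace_pre mulr_sumr.
  apply: eq_bigr => q1 _; rewrite mulr_sumr; apply: eq_bigr => q2 _.
  by rewrite trF mulrCA.
- move=> pp ao ai pp' ao' ai'; rewrite exchange_big_coef mulr_sumr.
  apply: eq_bigr => q1 _; rewrite mulr_sumr; apply: eq_bigr => q2 _.
  by rewrite trBI mulrCA.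
- move=> pp pp'; rewrite exchange_big_coef -(sum_isometry_dlt pp pp' isoB).
  by do 2!apply: eq_bigr => ? _; rewrite trAI.
Qed.

Lemma comb_BA_relabel (A : 'M[C]_(f', f)) (B : 'M[C]_(p', p))
    (X : 'M[C]_(a * b * f, p' * q * r)) :
  adjmx A *m A = 1%:M -> adjmx B *m B = 1%:M -> comb_BA X -> comb_BA (relabel A B X).
Proof.
move=> isoA isoB [R2 [R1 [trF trAI trBI]]].
pose c pp pp' q1 q2 := B q1 pp * (B q2 pp')^*.
exists (fun pp bo ai bi pp' bo' ai' bi' =>
  \sum_q1 \sum_q2 c pp pp' q1 q2 * R2 q1 bo ai bi q2 bo' ai' bi').
exists (fun pp bi pp' bi' => \sum_q1 \sum_q2 c pp pp' q1 q2 * R1 q1 bi q2 bi').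
split => /=.
- move=> pp ao bo ai bi pp' ao' bo' ai' bi'.
  rewrite /relabel -mulmxA choi_trace_post // choi_trace_pre mulr_sumr.
  apply: eq_bigr => q1 _; rewrite mulr_sumr; apply: eq_bigr => q2 _.
  by rewrite trF mulrCA.
- move=> pp bo bi pp' bo' bi'; rewrite exchange_big_coef mulr_sumr.
  apply: eq_bigr => q1 _; rewrite mulr_sumr; apply: eq_bigr => q2 _.
  by rewrite trAI mulrCA.
- move=> pp pp'; rewrite exchange_big_coef -(sum_isometry_dlt pp pp' isoB).
  by do 2!apply: eq_bigr => ? _; rewrite trBI.
Qed.

End Relabel.

Lemma relabel_tens a b f f' p p' q r (A : 'M[C]_(f', f)) (B : 'M[C]_(p', p))
    (S0 : 'M[C]_(a, p')) (S1 : 'M[C]_(b, q)) (T : 'M[C]_(f, r)) :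
  relabel A B ((S0 *t S1) *t T) = ((S0 *m B) *t S1) *t (A *m T).
Proof. by rewrite /relabel !tensmx_mul !mul1mx !mulmx1. Qed.

Lemma relabel_cross a b f f' p p' q r (A : 'M[C]_(f', f)) (B : 'M[C]_(p', p))
    (V0 : 'M[C]_(b, p')) (V1 : 'M[C]_(a, r)) (V2 : 'M[C]_(f, q)) :
  relabel A B (cross_op V0 V1 V2) = cross_op (V0 *m B) V1 (A *m V2).
Proof.
apply: matrix_idx3P => ai bi ff pp ao bo; rewrite relabelE crossE !mxE.
rewrite [RHS]mulrC mulr_suml; apply: eq_bigr => f1 _.
by rewrite !mulr_sumr; apply: eq_bigr => q1 _; rewrite crossE; ring.
Qed.

Lemma relabel_thin a b f' p p' q r (A : 'M[C]_(f', 0)) (B : 'M[C]_(p', p))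
    (X : 'M[C]_(a * b * 0, p' * q * r)) :
  relabel A B X = 0.
Proof. by rewrite /relabel [A]thinmx0 tensmx0 !mul0mx. Qed.

Lemma relabel_dsum a b p q r p1 p2 f1 f2 f' (WF : 'M[C]_(f', f1 + f2)) (WP : 'M[C]_(p, p1 + p2))
    (U1 : 'M[C]_(a * b * f1, p1 * q * r)) (U2 : 'M[C]_(a * b * f2, p2 * q * r)) :
  relabel WF (adjmx WP) (dsum_op U1 U2)
  = relabel (lsubmx WF) (adjmx (lsubmx WP)) U1 + relabel (rsubmx WF) (adjmx (rsubmx WP)) U2.
Proof.
have dsumE ai bi ao bo u v : dsum_op U1 U2 (idx3 ai bi (unsplit u)) (idx3 (unsplit v) ao bo)
    = match u, v with
      | inl ff, inl pp => U1 (idx3 ai bi ff) (idx3 pp ao bo)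
      | inr ff, inr pp => U2 (idx3 ai bi ff) (idx3 pp ao bo)
      | _, _ => 0 end.
  by rewrite mxE /ix1 /ix2 /ix3 !mxtens_indexK /= !unsplitK.
apply: matrix_idx3P => ai bi ff pp ao bo; rewrite relabelE [RHS]mxE !relabelE sumr_add.
congr (_ + _); apply: eq_bigr => f0 _; rewrite sumr_add.
  rewrite [X in _ + X]big1 ?addr0 => [|q0 _]; last first.
    by rewrite (dsumE _ _ _ _ (inl f0) (inr q0)) mulr0 mul0r.
  by apply: eq_bigr => q0 _; rewrite (dsumE _ _ _ _ (inl f0) (inl q0)) !mxE.
rewrite [X in X + _]big1 ?add0r => [|q0 _]; last first.
  by rewrite (dsumE _ _ _ _ (inr f0) (inl q0)) mulr0 mul0r.
by apply: eq_bigr => q0 _; rewrite (dsumE _ _ _ _ (inr f0) (inr q0)) !mxE.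
Qed.

Lemma relabel_ctrl d m n (e : (d + d = 2 * d)%N) (WF : 'M[C]_(m, d + d)) (WP : 'M[C]_(n, d + d))
    (U0 U1 U2 V0 V1 V2 : 'M[C]_d) :
  relabel (castmx (erefl m, e) WF) (adjmx (castmx (erefl n, e) WP)) (ctrl_op U0 U1 U2 V0 V1 V2)
  = relabel (lsubmx WF) (adjmx (lsubmx WP)) ((U0 *t U1) *t U2)
    + relabel (rsubmx WF) (adjmx (rsubmx WP)) (cross_op V0 V1 V2).
Proof.
(* [e] identifies C^2 (x) C^d with C^d (+) C^d by (c, t) |-> c * d + t, so the
   control value 0 selects the left summand. *)
pose c0 : 'I_2 := ord0; pose c1 : 'I_2 := lift ord0 ord0.
have sum2 (F : 'I_2 -> C) : \sum_c F c = F c0 + F c1 by rewrite big_ord_recl big_ord1.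
have castmxE' k (W : 'M[C]_(k, d + d)) i c t :
    castmx (erefl k, e) W i (mxtens_index (c, t))
    = if c == c0 then W i (lshift d t) else W i (rshift d t).
  rewrite castmxE cast_ord_id; case: c => -[|[|//]] lt_c2 /=;
    by congr (W i _); apply: val_inj; rewrite /= ?mul0n ?mul1n.
have ctrlE ai bi ao bo c t c' t' :
    ctrl_op U0 U1 U2 V0 V1 V2 (idx3 ai bi (mxtens_index (c, t)))
                              (idx3 (mxtens_index (c', t')) ao bo)
    = ((c' == c0) && (c == c0))%:R * (U0 ai t' * U1 bi ao * U2 t bo)
    + ((c' == c1) && (c == c1))%:R * (V0 bi t' * V1 ai bo * V2 t ao).
  by rewrite mxE /jx1 /jx2 /ix1 /ix2 /ix3 !mxtens_indexK.
apply: matrix_idx3P => ai bi ff pp ao bo.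
rewrite relabelE [RHS]mxE !relabelE sum_mxtens sum2.
congr (_ + _); apply: eq_bigr => t _; rewrite sum_mxtens sum2.
  rewrite [X in _ + X]big1 ?addr0 => [|t' _]; last by rewrite ctrlE /= !mul0r addr0 mulr0 mul0r.
  apply: eq_bigr => t' _; rewrite ctrlE /= mul1r mul0r addr0 adjmxE !castmxE' /=.
  by rewrite !tensmxE !mxE.
rewrite [X in X + _]big1 ?add0r => [|t' _]; last by rewrite ctrlE /= !mul0r addr0 mulr0 mul0r.
apply: eq_bigr => t' _; rewrite ctrlE /= mul1r mul0r add0r adjmxE !castmxE' /=.
by rewrite crossE !mxE; ring.
Qed.

Lemma causally_ordered_nopast aO bO aI bI f (V : 'M[C]_(aI * bI * f, 0 * aO * bO)) :
  causally_ordered V.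
Proof. by left; exists (fun _ _ _ _ _ _ _ _ => 0), (fun _ _ _ _ => 0); split; case. Qed.

Lemma unitary_comb_dim d p f (V : 'M[C]_(d * d * f, p * d * d)) :
  (0 < d)%N -> unitary_mx V -> f = p.
Proof.
move=> d_gt0 /unitary_dim /eqP; rewrite -[(p * d * d)%N]mulnA [(p * _)%N]mulnC.
by rewrite eqn_pmul2l ?muln_gt0 ?d_gt0 // => /eqP.
Qed.

Lemma dsum_causal_AB a b q r f f' p p1 (WF : 'M[C]_(f', f + 0)) (WP : 'M[C]_(p, p1 + 0))
    (U1 : 'M[C]_(a * b * f, p1 * q * r)) (U2 : 'M[C]_(a * b * 0, 0 * q * r)) :
  unitary_mx WF -> unitary_mx WP -> comb_AB U1 -> comb_AB (relabel WF (adjmx WP) (dsum_op U1 U2)).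
Proof.
move=> uWF uWP cU1; rewrite relabel_dsum relabel_thin addr0.
apply: comb_AB_relabel cU1; first by case: (unitary_lsubmx0 uWF).
by rewrite adjmxK; case: (unitary_lsubmx0 uWP).
Qed.

Lemma dsum_causal_BA a b q r f f' p p2 (WF : 'M[C]_(f', 0 + f)) (WP : 'M[C]_(p, 0 + p2))
    (U1 : 'M[C]_(a * b * 0, 0 * q * r)) (U2 : 'M[C]_(a * b * f, p2 * q * r)) :
  unitary_mx WF -> unitary_mx WP -> comb_BA U2 -> comb_BA (relabel WF (adjmx WP) (dsum_op U1 U2)).
Proof.
move=> uWF uWP cU2; rewrite relabel_dsum relabel_thin add0r.
apply: comb_BA_relabel cU2; first by case: (unitary_rsubmx0 uWF).
by rewrite adjmxK; case: (unitary_rsubmx0 uWP).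
Qed.

Lemma dsum_tens d m (WF WP : 'M[C]_(m, d + 0))
    (U1 : 'M[C]_(d * d * d, d * d * d)) (U2 : 'M[C]_(d * d * 0, 0 * d * d)) :
  (0 < d)%N -> unitary_mx WF -> unitary_mx WP -> unitary_mx U1 -> comb_AB U1 ->
  exists (U0 : 'M[C]_(d, m)) (U1' : 'M[C]_(d, d)) (U2' : 'M[C]_(m, d)),
    [/\ unitary_mx U0, unitary_mx U1', unitary_mx U2'
      & relabel WF (adjmx WP) (dsum_op U1 U2) = (U0 *t U1') *t U2'].
Proof.
move=> d_gt0 uWF uWP uU1 cU1.
have [S0 [S1 [T [uS0 uS1 uT ->]]]] := comb_AB_factor d_gt0 uU1.2 cU1.
rewrite relabel_dsum relabel_thin addr0 relabel_tens.
exists (S0 *m adjmx (lsubmx WP)), S1, (lsubmx WF *m T).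
by split => //; apply: unitaryM => //; [apply/unitary_adjmx | ]; apply: unitary_lsubmx0.
Qed.

Lemma dsum_cross d m (WF WP : 'M[C]_(m, 0 + d))
    (U1 : 'M[C]_(d * d * 0, 0 * d * d)) (U2 : 'M[C]_(d * d * d, d * d * d)) :
  (0 < d)%N -> unitary_mx WF -> unitary_mx WP -> unitary_mx U2 -> comb_BA U2 ->
  exists (V0 : 'M[C]_(d, m)) (V1 : 'M[C]_(d, d)) (V2 : 'M[C]_(m, d)),
    [/\ unitary_mx V0, unitary_mx V1, unitary_mx V2
      & relabel WF (adjmx WP) (dsum_op U1 U2) = cross_op V0 V1 V2].
Proof.
move=> d_gt0 uWF uWP uU2 cU2.
have [V0 [V1 [V2 [uV0 uV1 uV2 ->]]]] := comb_BA_factor d_gt0 uU2.2 cU2.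
rewrite relabel_dsum relabel_thin add0r relabel_cross.
exists (V0 *m adjmx (rsubmx WP)), V1, (rsubmx WF *m V2).
by split => //; apply: unitaryM => //; [apply/unitary_adjmx | ]; apply: unitary_rsubmx0.
Qed.

Lemma dsum_ctrl d m (WF WP : 'M[C]_(m, d + d)) (U1 U2 : 'M[C]_(d * d * d, d * d * d)) :
  (0 < d)%N -> unitary_mx WF -> unitary_mx WP ->
  unitary_mx U1 -> comb_AB U1 -> unitary_mx U2 -> comb_BA U2 ->
  exists (WP' WF' : 'M[C]_(m, 2 * d)) (U0 U1' U2' V0 V1 V2 : 'M[C]_d),
    [/\ unitary_mx WP', unitary_mx WF',
        [/\ unitary_mx U0, unitary_mx U1' & unitary_mx U2'],
        [/\ unitary_mx V0, unitary_mx V1 & unitary_mx V2] &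
        relabel WF (adjmx WP) (dsum_op U1 U2)
        = relabel WF' (adjmx WP') (ctrl_op U0 U1' U2' V0 V1 V2)].
Proof.
move=> d_gt0 uWF uWP uU1 cU1 uU2 cU2.
have [S0 [S1 [T [uS0 uS1 uT ->]]]] := comb_AB_factor d_gt0 uU1.2 cU1.
have [V0 [V1 [V2 [uV0 uV1 uV2 ->]]]] := comb_BA_factor d_gt0 uU2.2 cU2.
have e : (d + d = 2 * d)%N by rewrite addnn mul2n.
exists (castmx (erefl m, e) WP), (castmx (erefl m, e) WF), S0, S1, T, V0, V1, V2.
by split; rewrite ?relabel_ctrl ?relabel_dsum //; apply: unitary_castmx.
Qed.

End Supermaps.

Theorem corollary5 (C : numClosedFieldType) (d D : nat)
    (U : 'M[C]_(d * d * D, D * d * d)) :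
  unitary_mx U -> dsum_pure_combs U ->
  (D = d ->
     causally_ordered U /\
     ((exists (U0 : 'M[C]_(d, D)) (U1 : 'M[C]_(d, d)) (U2 : 'M[C]_(D, d)),
         [/\ unitary_mx U0, unitary_mx U1, unitary_mx U2 & U = (U0 *t U1) *t U2])
      \/
      (exists (V0 : 'M[C]_(d, D)) (V1 : 'M[C]_(d, d)) (V2 : 'M[C]_(D, d)),
         [/\ unitary_mx V0, unitary_mx V1, unitary_mx V2 & U = cross_op V0 V1 V2])))
  /\
  (D = (2 * d)%N ->
     causally_ordered U \/
     exists (WP WF : 'M[C]_(D, 2 * d)) (U0 U1 U2 V0 V1 V2 : 'M[C]_d),
       [/\ unitary_mx WP, unitary_mx WF,
           [/\ unitary_mx U0, unitary_mx U1 & unitary_mx U2],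
           [/\ unitary_mx V0, unitary_mx V1 & unitary_mx V2] &
           U = ((1%:M *t 1%:M) *t WF) *m ctrl_op U0 U1 U2 V0 V1 V2
                 *m ((adjmx WP *t 1%:M) *t 1%:M)]).
Proof.
(* The unitarity of U is implied by the direct-sum decomposition. *)
move=> _ [p1 [p2 [f1 [f2 [WP [WF [U1 [U2 [uWP uWF [uU1 cU1] [uU2 cU2] ->]]]]]]]]].
have [d0 | d_gt0] := posnP d.
  subst d; split=> eD; subst D; last by left; apply: causally_ordered_nopast.
  split; first exact: causally_ordered_nopast.
  by left; exists 1%:M, 1%:M, 1%:M; split; try exact: unitary1; apply/matrixP => -[].
have ef1 := unitary_comb_dim d_gt0 uU1; have ef2 := unitary_comb_dim d_gt0 uU2.
have eD := unitary_dim uWP; subst f1 f2 D.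
have le_d_p1 : (0 < p1)%N -> (d <= p1)%N.
  by move=> p1_gt0; apply: comb_AB_dim uU1.2 cU1 _; rewrite muln_gt0 p1_gt0.
have le_d_p2 : (0 < p2)%N -> (d <= p2)%N.
  by move=> p2_gt0; apply: comb_BA_dim uU2.2 cU2 _; rewrite muln_gt0 p2_gt0.
split=> eD.
  have [p2_0 | p2_gt0] := posnP p2.
    subst p2; have ep1 : p1 = d by rewrite -eD addn0.
    subst p1; split; first by left; apply: dsum_causal_AB.
    by left; apply: dsum_tens.
  have p1_0 : p1 = 0%N by case: (posnP p1) => // /le_d_p1; have := le_d_p2 p2_gt0; lia.
  subst p1; have ep2 : p2 = d by rewrite -eD.
  subst p2; split; first by right; apply: dsum_causal_BA.
  by right; apply: dsum_cross.
have [p2_0 | p2_gt0] := posnP p2; first by subst p2; left; left; apply: dsum_causal_AB.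
have [p1_0 | p1_gt0] := posnP p1; first by subst p1; left; right; apply: dsum_causal_BA.
have [ep1 ep2] : p1 = d /\ p2 = d by have := le_d_p1 p1_gt0; have := le_d_p2 p2_gt0; lia.
by subst p1 p2; right; apply: dsum_ctrl.
Qed.
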